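(* Let $Q:(-\infty,-1)\to(-\infty,0)$ be the inverse of the strictly increasing function $G\mapsto G-e^G$ on $(-\infty,0)$, and define $R:\mathbb{R}\to\mathbb{R}$ by $R(V)=-2(1-e^{Q(V)})^2$ for $V<-1$ and $R(V)=4(V+1)$ for $V\ge -1$. Then, up to translations $s\mapsto s+s_0$, the two-point boundary value problem $$V''-3V'=R(V),\ s\in(-\infty,\infty),\qquad V(-\infty)=-1,\quad V(\infty)=-\infty$$ has a unique solution; that is, if $V_1,V_2$ are two solutions, there exists $s_0\in\mathbb{R}$ with $V_1(s)=V_2(s+s_0)$ for all $s$.
   Context: Here prime denotes $d/ds$, and $V(-\infty)$, $V(\infty)$ denote the limits as $s\to-\infty$, $s\to\infty$. *)

From Stdlib Require Import Reals Lra ClassicalEpsilon.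
From Coquelicot Require Import Coquelicot.
Open Scope R_scope.

(* Q : (-oo,-1) -> (-oo,0), inverse of G |-> G - exp G on (-oo,0).
   For V < -1 there is a unique such G; outside (-oo,-1) the value is
   irrelevant (Q is only used for V < -1). *)
Definition Q (V : R) : R :=
  epsilon (inhabits 0) (fun G => G < 0 /\ G - exp G = V).

(* The right-hand side R(V) of the paper (named Rfun to avoid clashing with the type R). *)
Definition Rfun (V : R) : R :=
  if Rlt_dec V (-1) then -2 * (1 - exp (Q V)) ^ 2 else 4 * (V + 1).

Definition is_bvp_solution (V : R -> R) : Prop :=
  (forall s, ex_derive V s /\ ex_derive (Derive V) s /\
     Derive_n V 2 s - 3 * Derive V s = Rfun (V s)) /\
  is_lim V m_infty (-1) /\
  is_lim V p_infty m_infty.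

From Stdlib Require Import Reals Lra Lia ClassicalEpsilon Ranalysis5.
From Coquelicot Require Import Coquelicot.
Open Scope R_scope.

(* Put [u = -1 - V], so that the equation reads [u'' - 3 u' = force u] with
   [0 < force u <= 4 u] for [u > 0].  The decaying trajectories of the phase plane form a single
   curve [u' = qstar u], where [qstar qstar' = 3 qstar + force] and [qstar 0 = 0]; writing
   [qstar u = u * rho u], the function [rho] is the fixed point of a [4/9]-contraction on
   continuous functions with values in [[3, 13/3]].  Integrating [du / qstar u = ds] yields a
   solution.  Conversely, a solution stays below [-1]: at a maximum above [-1] we would have
   [V'' = 4 (V + 1) > 0], and the level [-1] cannot be reached by local uniqueness at the
   equilibrium.  Its defect [F = u' - qstar u] satisfies [F' = - (force u / qstar u) F], so [F^2]
   is nonincreasing; as [u] and [u'] vanish at [-oo], [F = 0], and [V] is a time shift of the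
   constructed solution. *)

(** * Calculus on the real line *)

Lemma continuity_pt_of_is_derive (f : R -> R) x l : is_derive f x l -> continuity_pt f x.
Proof.
  intro Hf. apply continuity_pt_filterlim.
  apply (@ex_derive_continuous R_AbsRing R_NormedModule). now exists l.
Qed.

Lemma continuity_pt_eps (f : R -> R) x :
  continuity_pt f x <->
  forall eps, 0 < eps -> exists d, 0 < d /\ forall y, Rabs (y - x) < d -> Rabs (f y - f x) < eps.
Proof.
  split.
  - intros Hf eps Heps. destruct (Hf eps Heps) as [d [Hd Hfd]]. exists d. split; [exact Hd|].
    intros y Hy. destruct (Req_dec y x) as [->|Hyx].
    + rewrite Rminus_eq_0, Rabs_R0. exact Heps.
    + apply Hfd. now repeat split.
  - intros Hf eps Heps. destruct (Hf eps Heps) as [d [Hd Hfd]]. exists d. split; [exact Hd|].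
    intros y [_ Hy]. exact (Hfd y Hy).
Qed.

Lemma locally_of_Rabs_lt (P : R -> Prop) (x d : R) : 0 < d ->
  (forall y, Rabs (y - x) < d -> P y) -> locally x P.
Proof. intros Hd HP. exists (mkposreal d Hd). exact HP. Qed.

Lemma MVT_is_derive (f df : R -> R) a b : a <= b ->
  (forall x, a <= x <= b -> is_derive f x (df x)) ->
  exists c, a <= c <= b /\ f b - f a = df c * (b - a).
Proof.
  intros Hab Hf.
  destruct (MVT_gen f a b df) as [c [Hc Hfc]]; rewrite ?Rmin_left, ?Rmax_right in * by lra.
  - intros x Hx. apply Hf. lra.
  - intros x Hx. apply (continuity_pt_of_is_derive f x (df x)), Hf, Hx.
  - now exists c.
Qed.

Lemma is_derive_nonneg_le (f df : R -> R) a b : a <= b ->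
  (forall x, a <= x <= b -> is_derive f x (df x)) ->
  (forall x, a <= x <= b -> 0 <= df x) -> f a <= f b.
Proof.
  intros Hab Hf Hdf. destruct (MVT_is_derive f df a b Hab Hf) as [c [Hc Hfc]].
  pose proof (Hdf c Hc). nra.
Qed.

Lemma is_derive_pos_lt (f df : R -> R) a b : a < b ->
  (forall x, a <= x <= b -> is_derive f x (df x)) ->
  (forall x, a <= x <= b -> 0 < df x) -> f a < f b.
Proof.
  intros Hab Hf Hdf. destruct (MVT_is_derive f df a b (Rlt_le _ _ Hab) Hf) as [c [Hc Hfc]].
  pose proof (Hdf c Hc). nra.
Qed.

Lemma is_derive_0_eq (f : R -> R) : (forall x, is_derive f x 0) -> forall a b, f a = f b.
Proof.
  intros Hf.
  assert (Hle : forall a b, a <= b -> f a = f b).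
  { intros a b Hab. destruct (MVT_is_derive f (fun _ => 0) a b Hab (fun x _ => Hf x)) as [c [_ Hc]].
    lra. }
  intros a b. destruct (Rle_or_lt a b); [auto| symmetry; apply Hle; lra].
Qed.

Lemma Rabs_sub_le_of_is_derive (f df g dg : R -> R) a b : a <= b ->
  (forall x, a <= x <= b -> is_derive f x (df x)) ->
  (forall x, a <= x <= b -> is_derive g x (dg x)) ->
  (forall x, a <= x <= b -> Rabs (df x) <= dg x) ->
  Rabs (f b - f a) <= g b - g a.
Proof.
  intros Hab Hf Hg Hb. apply Rabs_le_between.
  assert (g a - f a <= g b - f b).
  { apply (is_derive_nonneg_le (fun x => g x - f x) (fun x => dg x - df x)); [exact Hab| |].
    - intros x Hx. exact (is_derive_minus g f x _ _ (Hg x Hx) (Hf x Hx)).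
    - intros x Hx. pose proof (proj1 (Rabs_le_between _ _) (Hb x Hx)). lra. }
  assert (g a + f a <= g b + f b).
  { apply (is_derive_nonneg_le (fun x => g x + f x) (fun x => dg x + df x)); [exact Hab| |].
    - intros x Hx. exact (is_derive_plus g f x _ _ (Hg x Hx) (Hf x Hx)).
    - intros x Hx. pose proof (proj1 (Rabs_le_between _ _) (Hb x Hx)). lra. }
  lra.
Qed.

Lemma is_derive_mult_const (k x : R) : is_derive (fun s => k * s) x k.
Proof. auto_derive; [exact I| ring]. Qed.

Lemma exists_global_max (f : R -> R) t a b : a < t < b -> (forall x, continuity_pt f x) ->
  (forall x, x <= a \/ b <= x -> f x < f t) -> exists c, forall x, f x <= f c.
Proof.
  intros Ht Hf Hout.
  destruct (continuity_ab_maj f a b ltac:(lra) (fun x _ => Hf x)) as [c [Hc _]].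
  exists c. intro x. pose proof (Hc t ltac:(lra)).
  destruct (Rle_or_lt x a) as [Hx|Hx]; [pose proof (Hout x (or_introl Hx)); lra|].
  destruct (Rle_or_lt b x) as [Hx'|Hx']; [pose proof (Hout x (or_intror Hx')); lra|].
  apply Hc. lra.
Qed.

Lemma Derive_eq_0_at_max (f : R -> R) c : ex_derive f c ->
  (forall x, f x <= f c) -> Derive f c = 0.
Proof.
  intros Hd Hmax.
  assert (pr : derivable_pt f c) by (exists (Derive f c); now apply is_derive_Reals, Derive_correct).
  rewrite <- (deriv_maximum f (c - 1) (c + 1) c pr ltac:(lra) ltac:(lra) (fun x _ _ => Hmax x)).
  symmetry. apply derive_pt_eq_0, is_derive_Reals, Derive_correct, Hd.
Qed.

(* At a maximum the second derivative is nonpositive: if it were positive, [f'] would be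
   positive just to the right of [c] and [f] would keep increasing. *)
Lemma second_derive_nonpos_at_max (f : R -> R) c l :
  (forall x, ex_derive f x) -> is_derive (Derive f) c l ->
  (forall x, f x <= f c) -> l <= 0.
Proof.
  intros Hf Hf2 Hmax. destruct (Rle_or_lt l 0) as [|Hl]; [assumption| exfalso].
  pose proof (Derive_eq_0_at_max f c (Hf c) Hmax) as Hc.
  destruct (proj1 (is_derive_Reals _ _ _) Hf2 (l / 2) ltac:(lra)) as [[d Hd] Hdl].
  assert (Hpos : forall x, c < x <= c + d / 2 -> 0 < Derive f x).
  { intros x Hx. specialize (Hdl (x - c) ltac:(lra) ltac:(rewrite Rabs_right; simpl; lra)).
    replace (c + (x - c)) with x in Hdl by ring. rewrite Hc in Hdl.
    apply Rabs_def2 in Hdl.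
    assert (Hquot : 0 < (Derive f x - 0) / (x - c)) by lra.
    apply Rdiv_pos_cases in Hquot as [[]|[]]; lra. }
  assert (f c <= f (c + d / 4)).
  { apply (is_derive_nonneg_le f (Derive f)); [simpl; lra| |].
    - intros x _. apply Derive_correct, Hf.
    - intros x Hx. destruct (Req_dec x c) as [->|]; [lra|]. left; apply Hpos; simpl in *; lra. }
  assert (f (c + d / 4) < f (c + d / 2)).
  { apply (is_derive_pos_lt f (Derive f)); [simpl; lra| |].
    - intros x _. apply Derive_correct, Hf.
    - intros x Hx. apply Hpos. simpl in *. lra. }
  pose proof (Hmax (c + d / 2)). lra.
Qed.

Lemma sq_nonincreasing_of_is_derive (F a : R -> R) :
  (forall x, is_derive F x (- a x * F x)) -> (forall x, 0 <= a x) ->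
  forall s t, s <= t -> F t ^ 2 <= F s ^ 2.
Proof.
  intros HF Ha s t Hst.
  enough (- F s ^ 2 <= - F t ^ 2) by lra.
  apply (is_derive_nonneg_le (fun x => - F x ^ 2) (fun x => 2 * a x * F x ^ 2)); [exact Hst| |].
  - intros x _.
    replace (2 * a x * F x ^ 2) with (- (INR 2 * (- a x * F x) * F x ^ 1)) by (simpl; ring).
    exact (is_derive_opp (fun y => F y ^ 2) x _ (is_derive_pow F 2 x _ (HF x))).
  - intros x _. pose proof (Ha x). pose proof (pow2_ge_0 (F x)). nra.
Qed.

Lemma ex_RInt_of_continuity (f : R -> R) a b : (forall x, continuity_pt f x) -> ex_RInt f a b.
Proof.
  intro Hf. apply (@ex_RInt_continuous R_CompleteNormedModule).
  intros z _. now apply continuity_pt_filterlim.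
Qed.

Lemma is_derive_RInt_continuity (f : R -> R) a x : (forall y, continuity_pt f y) ->
  is_derive (fun b => RInt f a b) x (f x).
Proof.
  intro Hf. apply (is_derive_RInt f _ a).
  - apply filter_forall. intro b.
    apply (@RInt_correct R_CompleteNormedModule), ex_RInt_of_continuity, Hf.
  - now apply continuity_pt_filterlim.
Qed.

Lemma RInt_average_between (f : R -> R) u lo hi : 0 < u -> ex_RInt f 0 u ->
  (forall x, 0 <= x <= u -> lo <= f x <= hi) -> lo <= RInt f 0 u / u <= hi.
Proof.
  intros Hu Hf Hb.
  assert (lo * u <= RInt f 0 u).
  { replace (lo * u) with (RInt (fun _ => lo) 0 u)
      by (rewrite RInt_const; unfold scal; simpl; unfold mult; simpl; ring).
    apply RInt_le; [lra| apply ex_RInt_const| exact Hf| intros x Hx; apply Hb; lra]. }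
  assert (RInt f 0 u <= hi * u).
  { replace (hi * u) with (RInt (fun _ => hi) 0 u)
      by (rewrite RInt_const; unfold scal; simpl; unfold mult; simpl; ring).
    apply RInt_le; [lra| exact Hf| apply ex_RInt_const| intros x Hx; apply Hb; lra]. }
  split; [apply Rle_div_r| apply Rle_div_l]; lra.
Qed.

Lemma RInt_average_near_0 (f : R -> R) : (forall x, continuity_pt f x) ->
  forall eps, 0 < eps -> exists d, 0 < d /\ forall u, 0 < u < d -> Rabs (RInt f 0 u / u - f 0) < eps.
Proof.
  intros Hf eps Heps.
  destruct (proj1 (continuity_pt_eps f 0) (Hf 0) (eps / 2) ltac:(lra)) as [d [Hd Hfd]].
  exists d. split; [exact Hd|]. intros u Hu.
  assert (Hb : f 0 - eps / 2 <= RInt f 0 u / u <= f 0 + eps / 2).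
  { apply RInt_average_between; [lra| apply ex_RInt_of_continuity, Hf|].
    intros x Hx. assert (Hx0 : Rabs (x - 0) < d) by (apply Rabs_def1; lra).
    pose proof (Rabs_def2 _ _ (Hfd x Hx0)). lra. }
  apply Rabs_def1; lra.
Qed.

Lemma continuity_pt_split_at_0 (f g : R -> R) :
  (forall u, u <= 0 -> f u = f 0) -> (forall u, 0 < u -> f u = g u) ->
  (forall u, 0 < u -> continuity_pt g u) ->
  (forall eps, 0 < eps -> exists d, 0 < d /\ forall u, 0 < u < d -> Rabs (g u - f 0) < eps) ->
  forall u, continuity_pt f u.
Proof.
  intros Hneg Hpos Hg Hlim u. destruct (Rtotal_order u 0) as [Hu|[->|Hu]].
  - apply (continuity_pt_ext_loc (fun _ => f 0)).
    + apply (locally_of_Rabs_lt _ u (- u)); [lra|].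
      intros y Hy. apply Rabs_def2 in Hy. symmetry. apply Hneg. lra.
    + apply continuity_pt_const. now intros ? ?.
  - apply continuity_pt_eps. intros eps Heps. destruct (Hlim eps Heps) as [d [Hd Hgd]].
    exists d. split; [exact Hd|]. intros y Hy. rewrite Rminus_0_r in Hy. apply Rabs_def2 in Hy.
    destruct (Rle_or_lt y 0) as [Hy0|Hy0].
    + rewrite (Hneg y Hy0), Rminus_eq_0, Rabs_R0. exact Heps.
    + rewrite (Hpos y Hy0). apply Hgd. lra.
  - apply (continuity_pt_ext_loc g); [|exact (Hg u Hu)].
    apply (locally_of_Rabs_lt _ u u); [exact Hu|].
    intros y Hy. apply Rabs_def2 in Hy. symmetry. apply Hpos. lra.
Qed.

Lemma exp_le_compat a b : a <= b -> exp a <= exp b.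
Proof. intros [Hab| ->]; [left; now apply exp_increasing| lra]. Qed.

Lemma exp_lt_1 x : x < 0 -> exp x < 1.
Proof. intro Hx. rewrite <- exp_0. now apply exp_increasing. Qed.

Lemma exp_sub_le a b : a <= b -> exp b - exp a <= exp b * (b - a).
Proof.
  intro Hab. destruct (MVT_is_derive exp exp a b Hab (fun x _ => is_derive_exp x)) as [c [Hc ->]].
  apply Rmult_le_compat_r; [lra| apply exp_le_compat; lra].
Qed.

(** * The nonlinearity *)

(* For [V < -1] write [Q V = - y]; then [-1 - V = level y] and [Rfun V = -2 (1 - exp (- y))^2]. *)
Definition level (y : R) : R := exp (- y) - 1 + y.

Lemma level_le a b : 0 <= a <= b -> level a <= level b.
Proof.
  intro Hab. apply (is_derive_nonneg_le level (fun y => 1 - exp (- y))); [lra| |].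
  - intros y _. unfold level. auto_derive; [exact I| ring].
  - intros y Hy. pose proof (exp_le_compat (- y) 0 ltac:(lra)). rewrite exp_0 in *. lra.
Qed.

Lemma exp_neg_le_quadratic y : 0 <= y -> exp (- y) <= 1 - y + y ^ 2 / 2.
Proof.
  intro Hy. set (h := fun t => 1 - t + t ^ 2 / 2 - exp (- t)).
  enough (h 0 <= h y) by (unfold h in *; rewrite Ropp_0, exp_0 in *; lra).
  apply (is_derive_nonneg_le h (fun t => exp (- t) - 1 + t)); [exact Hy| |].
  - intros t _. unfold h. auto_derive; [exact I| field].
  - intros t _. pose proof (exp_ineq1_le (- t)). lra.
Qed.

Lemma level_1_ge : 1 / 3 <= level 1.
Proof.
  unfold level. rewrite exp_Ropp. pose proof (Rinv_le_contravar _ _ (exp_pos 1) exp_le_3). lra.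
Qed.

Lemma level_ge_cubic y : 0 <= y -> y ^ 2 / 2 - y ^ 3 / 6 <= level y.
Proof.
  intro Hy. set (h := fun t => level t - t ^ 2 / 2 + t ^ 3 / 6).
  enough (h 0 <= h y) by (unfold h, level in *; rewrite Ropp_0, exp_0 in *; lra).
  apply (is_derive_nonneg_le h (fun t => 1 - t + t ^ 2 / 2 - exp (- t))); [exact Hy| |].
  - intros t _. unfold h, level. auto_derive; [exact I| field].
  - intros t Ht. pose proof (exp_neg_le_quadratic t ltac:(lra)). lra.
Qed.

Lemma sq_one_sub_exp_le_level y : 0 <= y -> 2 * (1 - exp (- y)) ^ 2 <= 4 * level y.
Proof.
  intro Hy. set (h := fun t => 4 * level t - 2 * (1 - exp (- t)) ^ 2).
  enough (h 0 <= h y) by (unfold h, level in *; rewrite Ropp_0, exp_0 in *; lra).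
  apply (is_derive_nonneg_le h (fun t => 4 * (1 - exp (- t)) ^ 2)); [exact Hy| |].
  - intros t _. unfold h, level. auto_derive; [exact I| field].
  - intros t _. apply Rmult_le_pos; [lra| apply pow2_ge_0].
Qed.

Lemma level_sub_sq_le_cube y : 0 <= y -> 4 * level y - 2 * (1 - exp (- y)) ^ 2 <= 4 / 3 * y ^ 3.
Proof.
  intro Hy. set (h := fun t => 4 / 3 * t ^ 3 - (4 * level t - 2 * (1 - exp (- t)) ^ 2)).
  enough (h 0 <= h y) by (unfold h, level in *; rewrite Ropp_0, exp_0 in *; lra).
  apply (is_derive_nonneg_le h (fun t => 4 * t ^ 2 - 4 * (1 - exp (- t)) ^ 2)); [exact Hy| |].
  - intros t _. unfold h, level. auto_derive; [exact I| field].
  - intros t Ht. pose proof (exp_ineq1_le (- t)). pose proof (exp_le_compat (- t) 0 ltac:(lra)).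
    rewrite exp_0 in *. nra.
Qed.

Lemma Q_spec V : V < -1 -> Q V < 0 /\ Q V - exp (Q V) = V.
Proof.
  intro HV. unfold Q. apply epsilon_spec.
  destruct (IVT_gen (fun G => G - exp G) V 0 V) as [G [HG HGV]].
  - intro x. apply (continuity_pt_of_is_derive _ x (1 - exp x)). auto_derive; [exact I| ring].
  - rewrite exp_0. pose proof (exp_pos V). rewrite Rmin_left, Rmax_right; lra.
  - rewrite Rmin_left, Rmax_right in HG by lra. exists G. split; [|exact HGV].
    destruct (Req_dec G 0) as [->|]; [rewrite exp_0 in HGV; lra| lra].
Qed.

Lemma Q_sub_le V1 V2 : V1 < -1 -> V2 < -1 -> Q V1 <= Q V2 ->
  (1 - exp (Q V2)) * (Q V2 - Q V1) <= V2 - V1.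
Proof.
  intros H1 H2 Hle. destruct (Q_spec V1 H1), (Q_spec V2 H2).
  pose proof (exp_sub_le _ _ Hle). nra.
Qed.

Lemma Q_le V1 V2 : V1 < -1 -> V2 < -1 -> V1 <= V2 -> Q V1 <= Q V2.
Proof.
  intros H1 H2 H12. destruct (Rle_or_lt (Q V1) (Q V2)) as [|Hlt]; [assumption|].
  pose proof (Q_sub_le V2 V1 H2 H1 (Rlt_le _ _ Hlt)).
  pose proof (exp_lt_1 _ (proj1 (Q_spec V1 H1))).
  assert (0 < (1 - exp (Q V1)) * (Q V1 - Q V2)) by (apply Rmult_lt_0_compat; lra). lra.
Qed.

Lemma Q_lipschitz W V1 V2 : W < -1 -> V1 <= W -> V2 <= W ->
  (1 - exp (Q W)) * Rabs (Q V1 - Q V2) <= Rabs (V1 - V2).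
Proof.
  intros HW.
  assert (Hc : 0 < 1 - exp (Q W)) by (pose proof (exp_lt_1 _ (proj1 (Q_spec W HW))); lra).
  assert (Hmon : forall V, V <= W -> exp (Q V) <= exp (Q W))
    by (intros V HV; apply exp_le_compat, Q_le; lra).
  assert (Hord : forall V1 V2, V1 <= W -> V2 <= W -> Q V1 <= Q V2 ->
            (1 - exp (Q W)) * (Q V2 - Q V1) <= V2 - V1).
  { intros V1' V2' H1 H2 Hle. pose proof (Q_sub_le V1' V2' ltac:(lra) ltac:(lra) Hle).
    pose proof (Hmon V2' H2). nra. }
  intros H1 H2. destruct (Rle_or_lt (Q V1) (Q V2)) as [Hle|Hlt].
  - specialize (Hord V1 V2 H1 H2 Hle).
    assert (0 <= (1 - exp (Q W)) * (Q V2 - Q V1)) by (apply Rmult_le_pos; lra).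
    rewrite Rabs_left1, Rabs_left1 by lra. lra.
  - specialize (Hord V2 V1 H2 H1 (Rlt_le _ _ Hlt)).
    assert (0 <= (1 - exp (Q W)) * (Q V1 - Q V2)) by (apply Rmult_le_pos; lra).
    rewrite Rabs_right, Rabs_right by lra. lra.
Qed.

Lemma continuity_pt_Q V : V < -1 -> continuity_pt Q V.
Proof.
  intro HV. set (W := (V - 1) / 2).
  set (c := 1 - exp (Q W)).
  assert (Hc : 0 < c)
    by (pose proof (exp_lt_1 _ (proj1 (Q_spec W ltac:(unfold W; lra)))); unfold c; lra).
  apply continuity_pt_eps. intros eps Heps. exists (Rmin (eps * c) (W - V)).
  split; [apply Rmin_pos; unfold W; nra|].
  intros V' HV'. pose proof (Rmin_l (eps * c) (W - V)) as Hmin1.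
  pose proof (Rmin_r (eps * c) (W - V)) as Hmin2.
  pose proof (Rabs_def2 _ _ (Rlt_le_trans _ _ _ HV' Hmin2)) as HV'W.
  pose proof (Q_lipschitz W V' V ltac:(unfold W; lra) ltac:(lra) ltac:(unfold W; lra)) as HQ.
  fold c in HQ. apply (Rmult_lt_reg_l c); [exact Hc| lra].
Qed.

Definition depth (u : R) : R := - Q (-1 - u).
Definition force (u : R) : R := - Rfun (-1 - u).
Definition slope (u : R) : R := if Rle_dec u 0 then 4 else force u / u.

Lemma depth_spec u : 0 < u -> 0 < depth u /\ level (depth u) = u.
Proof.
  intro Hu. destruct (Q_spec (-1 - u) ltac:(lra)). unfold depth, level.
  rewrite Ropp_involutive. lra.
Qed.

Lemma force_eq u : 0 < u -> force u = 2 * (1 - exp (- depth u)) ^ 2.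
Proof.
  intro Hu. unfold force, depth, Rfun. rewrite Ropp_involutive.
  destruct (Rlt_dec (-1 - u) (-1)); [ring| lra].
Qed.

Lemma force_nonpos u : u <= 0 -> force u = 4 * u.
Proof. intro Hu. unfold force, Rfun. destruct (Rlt_dec (-1 - u) (-1)); [lra| ring]. Qed.

Lemma force_pos u : 0 < u -> 0 < force u.
Proof.
  intro Hu. rewrite force_eq by exact Hu. destruct (depth_spec u Hu) as [Hy _].
  pose proof (exp_lt_1 (- depth u) ltac:(lra)).
  assert (0 < 1 - exp (- depth u)) by lra. nra.
Qed.

Lemma force_le u : 0 <= u -> force u <= 4 * u.
Proof.
  intros [Hu| <-]; [|rewrite force_nonpos; lra].
  rewrite force_eq by exact Hu. destruct (depth_spec u Hu) as [Hy Hlev].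
  rewrite <- Hlev at 2. now apply sq_one_sub_exp_le_level, Rlt_le.
Qed.

Lemma continuity_pt_force u : 0 < u -> continuity_pt force u.
Proof.
  intro Hu. unfold force.
  apply continuity_pt_opp, (continuity_pt_ext_loc (fun v => -2 * (1 - exp (Q (-1 - v))) ^ 2)).
  - apply (locally_of_Rabs_lt _ u u Hu). intros v Hv. apply Rabs_def2 in Hv.
    unfold Rfun. destruct (Rlt_dec (-1 - v) (-1)); [reflexivity| lra].
  - apply (continuity_pt_comp (fun v => Q (-1 - v)) (fun z => -2 * (1 - exp z) ^ 2)).
    + apply (continuity_pt_comp (fun v => -1 - v) Q).
      * reg.
      * apply continuity_pt_Q. lra.
    + reg.
Qed.

Lemma slope_nonpos u : u <= 0 -> slope u = 4.
Proof. intro Hu. unfold slope. destruct (Rle_dec u 0); [reflexivity| lra]. Qed.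

Lemma slope_pos u : 0 < slope u.
Proof.
  unfold slope. destruct (Rle_dec u 0); [lra|].
  apply Rdiv_lt_0_compat; [apply force_pos|]; lra.
Qed.

Lemma slope_le u : slope u <= 4.
Proof.
  unfold slope. destruct (Rle_dec u 0); [lra|].
  apply Rle_div_l; [lra|]. apply force_le. lra.
Qed.

(* With [y = depth u]: [y^2 <= 3 u] by [level_ge_cubic], and
   [4 - force u / u <= 4 y^3 / (3 u) <= 4 y] by [level_sub_sq_le_cube]. *)
Lemma force_div_near_0 eps : 0 < eps ->
  exists d, 0 < d /\ forall u, 0 < u < d -> Rabs (force u / u - 4) < eps.
Proof.
  intro Heps. exists (Rmin (1 / 3) (eps ^ 2 / 48)). split; [apply Rmin_pos; nra|].
  intros u [Hu Hud].
  pose proof (Rmin_l (1 / 3) (eps ^ 2 / 48)). pose proof (Rmin_r (1 / 3) (eps ^ 2 / 48)).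
  destruct (depth_spec u Hu) as [Hy Hlev]. pose proof (force_eq u Hu) as Hforce.
  set (y := depth u) in *.
  assert (Hy1 : y < 1).
  { destruct (Rlt_or_le y 1) as [|Hy1]; [assumption|].
    pose proof (level_le 1 y ltac:(lra)). pose proof level_1_ge. lra. }
  assert (Hy2 : y ^ 2 <= 3 * u).
  { pose proof (level_ge_cubic y ltac:(lra)). assert (y ^ 3 <= y ^ 2) by (simpl; nra). lra. }
  assert (Hyeps : y < eps / 4) by nra.
  pose proof (level_sub_sq_le_cube y ltac:(lra)) as Hcube.
  rewrite Hlev, <- Hforce in Hcube.
  pose proof (force_le u ltac:(lra)).
  assert (4 * u - 4 * u * y <= force u) by nra.
  assert (4 - 4 * y <= force u / u <= 4) by (split; [apply Rle_div_r| apply Rle_div_l]; lra).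
  apply Rabs_def1; lra.
Qed.

Lemma continuity_pt_slope u : continuity_pt slope u.
Proof.
  apply (continuity_pt_split_at_0 slope (fun v => force v / v)).
  - intros v Hv. rewrite !slope_nonpos by lra. reflexivity.
  - intros v Hv. unfold slope. destruct (Rle_dec v 0); [lra| reflexivity].
  - intros v Hv. apply continuity_pt_div; [apply continuity_pt_force, Hv| apply continuity_pt_id| lra].
  - rewrite slope_nonpos by lra. apply force_div_near_0.
Qed.

(** * The phase curve *)

(* Integrating [qstar qstar' = 3 qstar + force] with [qstar 0 = 0] and writing
   [qstar u = u * rho u] gives the fixed-point equation [rho = phase_map rho]; on [u <= 0] the
   map takes its limiting value at [0+]. *)
Definition admissible (rho : R -> R) : Prop :=
  (forall u, continuity_pt rho u) /\ (forall u, 3 <= rho u <= 13 / 3).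

Definition phase_map (rho : R -> R) (u : R) : R :=
  if Rle_dec u 0 then 3 + 4 / rho 0 else 3 + RInt (fun w => slope w / rho w) 0 u / u.

Section Admissible.

Variable rho : R -> R.
Hypothesis Hrho : admissible rho.

Lemma continuity_pt_slope_div w : continuity_pt (fun w => slope w / rho w) w.
Proof.
  destruct Hrho as [Hc Hb]. apply continuity_pt_div; [apply continuity_pt_slope| apply Hc|].
  specialize (Hb w). lra.
Qed.

Lemma slope_div_between w : 0 <= slope w / rho w <= 4 / 3.
Proof.
  destruct Hrho as [_ Hb]. specialize (Hb w). pose proof (slope_pos w). pose proof (slope_le w).
  split; [apply Rle_div_r| apply Rle_div_l]; lra.
Qed.

Lemma phase_map_admissible : admissible (phase_map rho).
Proof.
  split.
  - apply (continuity_pt_split_at_0 _ (fun u => 3 + RInt (fun w => slope w / rho w) 0 u / u)).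
    + intros u Hu. unfold phase_map. destruct (Rle_dec u 0), (Rle_dec 0 0); lra.
    + intros u Hu. unfold phase_map. destruct (Rle_dec u 0); [lra| reflexivity].
    + intros u Hu. apply continuity_pt_plus; [apply continuity_pt_const; now intros ? ?|].
      apply continuity_pt_div; [| apply continuity_pt_id| lra].
      eapply continuity_pt_of_is_derive, is_derive_RInt_continuity, continuity_pt_slope_div.
    + intros eps Heps.
      destruct (RInt_average_near_0 _ continuity_pt_slope_div eps Heps) as [d [Hd Hnear]].
      exists d. split; [exact Hd|]. intros u Hu. specialize (Hnear u Hu).
      rewrite slope_nonpos in Hnear by lra.
      unfold phase_map. destruct (Rle_dec 0 0); [|lra].
      replace (3 + RInt (fun w => slope w / rho w) 0 u / u - (3 + 4 / rho 0))
        with (RInt (fun w => slope w / rho w) 0 u / u - 4 / rho 0) by ring.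
      exact Hnear.
  - intro u. unfold phase_map. destruct (Rle_dec u 0).
    + pose proof (slope_div_between 0) as Hb. rewrite slope_nonpos in Hb by lra. lra.
    + pose proof (RInt_average_between _ u 0 (4 / 3) ltac:(lra)
        (ex_RInt_of_continuity _ 0 u continuity_pt_slope_div) (fun w _ => slope_div_between w)).
      lra.
Qed.

End Admissible.

Lemma slope_div_lipschitz rho1 rho2 D : admissible rho1 -> admissible rho2 ->
  (forall u, Rabs (rho1 u - rho2 u) <= D) ->
  forall w, Rabs (slope w / rho1 w - slope w / rho2 w) <= 4 / 9 * D.
Proof.
  intros [_ H1] [_ H2] HD w. specialize (H1 w). specialize (H2 w). specialize (HD w).
  pose proof (slope_pos w). pose proof (slope_le w). pose proof (Rabs_pos (rho1 w - rho2 w)).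
  replace (slope w / rho1 w - slope w / rho2 w) with (slope w * (rho2 w - rho1 w) / (rho1 w * rho2 w))
    by (field; lra).
  rewrite Rabs_div, Rabs_mult, Rabs_minus_sym, (Rabs_right (slope w)), (Rabs_right (rho1 w * rho2 w))
    by nra.
  apply Rle_div_l; [nra|].
  assert (slope w * Rabs (rho1 w - rho2 w) <= 4 * D) by (apply Rmult_le_compat; lra).
  assert (9 <= rho1 w * rho2 w) by nra. nra.
Qed.

Lemma phase_map_contraction rho1 rho2 D : admissible rho1 -> admissible rho2 ->
  (forall u, Rabs (rho1 u - rho2 u) <= D) ->
  forall u, Rabs (phase_map rho1 u - phase_map rho2 u) <= 4 / 9 * D.
Proof.
  intros H1 H2 HD u. pose proof (slope_div_lipschitz rho1 rho2 D H1 H2 HD) as Hw.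
  unfold phase_map. destruct (Rle_dec u 0).
  - specialize (Hw 0). rewrite slope_nonpos in Hw by lra.
    replace (3 + 4 / rho1 0 - (3 + 4 / rho2 0)) with (4 / rho1 0 - 4 / rho2 0) by ring. exact Hw.
  - set (g1 := fun w => slope w / rho1 w). set (g2 := fun w => slope w / rho2 w).
    pose proof (ex_RInt_of_continuity g1 0 u (continuity_pt_slope_div rho1 H1)) as Hg1.
    pose proof (ex_RInt_of_continuity g2 0 u (continuity_pt_slope_div rho2 H2)) as Hg2.
    assert (Hsub : RInt (fun w => g1 w - g2 w) 0 u = RInt g1 0 u - RInt g2 0 u)
      by exact (RInt_minus g1 g2 0 u Hg1 Hg2).
    replace (3 + RInt g1 0 u / u - (3 + RInt g2 0 u / u)) with (RInt (fun w => g1 w - g2 w) 0 u / u)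
      by (rewrite Hsub; field; lra).
    apply Rabs_le_between, RInt_average_between; [lra| apply (ex_RInt_minus g1 g2 0 u Hg1 Hg2)|].
    intros w _. apply Rabs_le_between, Hw.
Qed.

Definition phase_iter (n : nat) : R -> R := Nat.iter n phase_map (fun _ => 4).

Lemma phase_iter_admissible n : admissible (phase_iter n).
Proof.
  induction n as [|n IH].
  - split; [intro u; apply continuity_pt_const; now intros ? ?| intro u; simpl; lra].
  - exact (phase_map_admissible _ IH).
Qed.

Lemma phase_iter_step n u : Rabs (phase_iter (S n) u - phase_iter n u) <= 4 / 3 * (4 / 9) ^ n.
Proof.
  revert u. induction n as [|n IH]; intro u.
  - pose proof (proj2 (phase_iter_admissible 1) u). simpl in *. apply Rabs_le_between. lra.
  - simpl pow. replace (4 / 3 * (4 / 9 * (4 / 9) ^ n)) with (4 / 9 * (4 / 3 * (4 / 9) ^ n)) by ring.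
    exact (phase_map_contraction _ _ _ (phase_iter_admissible (S n)) (phase_iter_admissible n) IH u).
Qed.

Lemma phase_iter_tail n k u : Rabs (phase_iter (n + k) u - phase_iter n u) <= 12 / 5 * (4 / 9) ^ n.
Proof.
  pose proof (pow_lt (4 / 9) n ltac:(lra)).
  enough (Rabs (phase_iter (n + k) u - phase_iter n u) <= 12 / 5 * (4 / 9) ^ n * (1 - (4 / 9) ^ k))
    by (pose proof (pow_lt (4 / 9) k ltac:(lra)); nra).
  induction k as [|k IH].
  - rewrite Nat.add_0_r, Rminus_eq_0, Rabs_R0. simpl. lra.
  - replace (n + S k)%nat with (S (n + k)) by lia.
    pose proof (phase_iter_step (n + k) u) as Hstep. rewrite pow_add in Hstep.
    replace (phase_iter (S (n + k)) u - phase_iter n u) with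
      ((phase_iter (S (n + k)) u - phase_iter (n + k) u) + (phase_iter (n + k) u - phase_iter n u))
      by ring.
    eapply Rle_trans; [apply Rabs_triang|]. simpl pow. lra.
Qed.

Lemma is_lim_seq_between (v : nat -> R) (l a b : R) : is_lim_seq v l ->
  (forall n, a <= v n <= b) -> a <= l <= b.
Proof.
  intros Hv Hab. split.
  - exact (is_lim_seq_le (fun _ => a) v a l (fun n => proj1 (Hab n)) (is_lim_seq_const a) Hv).
  - exact (is_lim_seq_le v (fun _ => b) l b (fun n => proj2 (Hab n)) Hv (is_lim_seq_const b)).
Qed.

Lemma pow_4_9_small eps : 0 < eps -> exists N, (4 / 9) ^ N < eps.
Proof.
  intro Heps. destruct (pow_lt_1_zero (4 / 9) ltac:(rewrite Rabs_right; lra) eps Heps) as [N HN].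
  exists N. specialize (HN N (Nat.le_refl N)). rewrite Rabs_right in HN; [exact HN|].
  left; apply pow_lt; lra.
Qed.

Definition rho_star (u : R) : R := Lim_seq (fun n => phase_iter n u).

Lemma is_lim_seq_phase_iter u : is_lim_seq (fun n => phase_iter n u) (rho_star u).
Proof.
  apply Lim_seq_correct', ex_lim_seq_cauchy_corr. intros [eps Heps]. simpl.
  destruct (pow_4_9_small (eps / 5) ltac:(lra)) as [N HN]. exists N. intros n m Hn Hm.
  pose proof (phase_iter_tail N (n - N) u). pose proof (phase_iter_tail N (m - N) u).
  replace (N + (n - N))%nat with n in * by lia. replace (N + (m - N))%nat with m in * by lia.
  replace (phase_iter n u - phase_iter m u)
    with ((phase_iter n u - phase_iter N u) - (phase_iter m u - phase_iter N u)) by ring.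
  eapply Rle_lt_trans; [apply Rabs_triang|]. rewrite Rabs_Ropp. lra.
Qed.

Lemma rho_star_approx n u : Rabs (rho_star u - phase_iter n u) <= 12 / 5 * (4 / 9) ^ n.
Proof.
  apply Rabs_le_between'.
  apply (is_lim_seq_between (fun k => phase_iter (n + k) u)).
  - apply (is_lim_seq_ext (fun k => phase_iter (k + n) u)); [intro k; now rewrite Nat.add_comm|].
    apply (is_lim_seq_incr_n (fun k => phase_iter k u) n), is_lim_seq_phase_iter.
  - intro k. apply Rabs_le_between', phase_iter_tail.
Qed.

Lemma rho_star_admissible : admissible rho_star.
Proof.
  split.
  - intro u. apply continuity_pt_eps. intros eps Heps.
    destruct (pow_4_9_small (eps / 8) ltac:(lra)) as [N HN].
    destruct (proj1 (continuity_pt_eps _ u) (proj1 (phase_iter_admissible N) u) (eps / 3) ltac:(lra))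
      as [d [Hd Hcont]].
    exists d. split; [exact Hd|]. intros y Hy.
    pose proof (Rabs_def2 _ _ (Hcont y Hy)).
    pose proof (proj1 (Rabs_le_between' _ _ _) (rho_star_approx N y)).
    pose proof (proj1 (Rabs_le_between' _ _ _) (rho_star_approx N u)).
    apply Rabs_def1; lra.
  - intro u. apply (is_lim_seq_between _ _ _ _ (is_lim_seq_phase_iter u)).
    intro n. apply (phase_iter_admissible n).
Qed.

Lemma rho_star_fixed u : phase_map rho_star u = rho_star u.
Proof.
  assert (Hn : forall n, Rabs (phase_map rho_star u - rho_star u) <= 4 * (4 / 9) ^ n).
  { intro n.
    pose proof (phase_map_contraction _ _ _ rho_star_admissible (phase_iter_admissible n)
      (rho_star_approx n) u).
    pose proof (rho_star_approx (S n) u). pose proof (pow_lt (4 / 9) n ltac:(lra)).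
    change (phase_iter (S n)) with (phase_map (phase_iter n)) in *. simpl pow in *.
    replace (phase_map rho_star u - rho_star u)
      with ((phase_map rho_star u - phase_map (phase_iter n) u)
            - (rho_star u - phase_map (phase_iter n) u)) by ring.
    eapply Rle_trans; [apply Rabs_triang|]. rewrite Rabs_Ropp. lra. }
  destruct (Req_dec (phase_map rho_star u) (rho_star u)) as [|Hne]; [assumption| exfalso].
  pose proof (Rabs_pos_lt _ (Rminus_eq_contra _ _ Hne)).
  destruct (pow_4_9_small (Rabs (phase_map rho_star u - rho_star u) / 8) ltac:(lra)) as [N HN].
  specialize (Hn N). lra.
Qed.

Definition qstar (u : R) : R := u * rho_star u.

Lemma qstar_between u : 0 < u -> 3 * u <= qstar u <= 13 / 3 * u.
Proof. intro Hu. unfold qstar. pose proof (proj2 rho_star_admissible u). nra. Qed.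

Lemma continuity_pt_qstar u : continuity_pt qstar u.
Proof. apply continuity_pt_mult; [apply continuity_pt_id| apply (proj1 rho_star_admissible)]. Qed.

Lemma is_derive_qstar u : 0 < u -> is_derive qstar u (3 + force u / qstar u).
Proof.
  intro Hu. pose proof (qstar_between u Hu).
  apply (is_derive_ext_loc (fun v => 3 * v + RInt (fun w => slope w / rho_star w) 0 v)).
  - apply (locally_of_Rabs_lt _ u u Hu). intros v Hv. apply Rabs_def2 in Hv.
    unfold qstar. rewrite <- (rho_star_fixed v) at 1. unfold phase_map.
    destruct (Rle_dec v 0); [lra|]. simpl. field. lra.
  - replace (3 + force u / qstar u) with (3 + slope u / rho_star u).
    + apply (is_derive_plus (fun v => 3 * v)); [apply is_derive_mult_const|].
      apply (is_derive_RInt_continuity (fun w => slope w / rho_star w)).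
      apply continuity_pt_slope_div, rho_star_admissible.
    + unfold slope, qstar. destruct (Rle_dec u 0); [lra|].
      pose proof (proj2 rho_star_admissible u). field. lra.
Qed.

(* The time taken along the phase curve from the level [V = -2] to the level [V = -1 - u]. *)
Definition time_of (u : R) : R := RInt (fun w => / qstar w) 1 u.

Lemma continuity_pt_inv_qstar w : 0 < w -> continuity_pt (fun w => / qstar w) w.
Proof.
  intro Hw. apply continuity_pt_inv; [apply continuity_pt_qstar|].
  pose proof (qstar_between w Hw). lra.
Qed.

Lemma is_derive_time_of u : 0 < u -> is_derive time_of u (/ qstar u).
Proof.
  intro Hu. apply (is_derive_RInt (fun w => / qstar w) time_of 1 u).
  - apply (locally_of_Rabs_lt _ u (u / 2)); [lra|]. intros v Hv. apply Rabs_def2 in Hv.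
    apply (@RInt_correct R_CompleteNormedModule), (@ex_RInt_continuous R_CompleteNormedModule).
    intros z Hz. apply continuity_pt_filterlim, continuity_pt_inv_qstar.
    pose proof (Rmin_glb_lt 1 v 0 ltac:(lra) ltac:(lra)). lra.
  - apply continuity_pt_filterlim, continuity_pt_inv_qstar, Hu.
Qed.

Lemma time_of_lt u v : 0 < u -> u < v -> time_of u < time_of v.
Proof.
  intros Hu Huv. apply (is_derive_pos_lt time_of (fun w => / qstar w)); [exact Huv| |].
  - intros w Hw. apply is_derive_time_of. lra.
  - intros w Hw. apply Rinv_0_lt_compat. pose proof (qstar_between w ltac:(lra)). lra.
Qed.

Lemma time_of_1 : time_of 1 = 0.
Proof. exact (@RInt_point R_CompleteNormedModule 1 _). Qed.

Lemma time_of_sub_ln_le u v : 0 < u <= v -> time_of u - 3 / 13 * ln u <= time_of v - 3 / 13 * ln v.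
Proof.
  intro Huv.
  apply (is_derive_nonneg_le (fun w => time_of w - 3 / 13 * ln w) (fun w => / qstar w - 3 / 13 * / w));
    [lra| |].
  - intros w Hw. apply (is_derive_minus time_of (fun w => 3 / 13 * ln w)).
    + apply is_derive_time_of. lra.
    + apply is_derive_scal, is_derive_ln. lra.
  - intros w Hw. pose proof (qstar_between w ltac:(lra)) as Hq.
    pose proof (Rinv_le_contravar (qstar w) (13 / 3 * w) ltac:(lra) (proj2 Hq)) as Hinv.
    replace (/ (13 / 3 * w)) with (3 / 13 * / w) in Hinv by (field; lra). lra.
Qed.

Lemma time_of_surj s : exists u, 0 < u /\ time_of u = s.
Proof.
  set (u1 := Rmin 1 (exp (13 / 3 * s - 1))). set (u2 := Rmax 1 (exp (13 / 3 * s + 1))).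
  assert (Hu1 : 0 < u1) by (apply Rmin_pos; [lra| apply exp_pos]).
  assert (Hu2 : 1 <= u2) by apply Rmax_l.
  assert (Hs1 : time_of u1 < s).
  { pose proof (time_of_sub_ln_le u1 1 (conj Hu1 (Rmin_l _ _))).
    pose proof (ln_le u1 (exp (13 / 3 * s - 1)) Hu1 (Rmin_r _ _)).
    rewrite time_of_1, ln_1, ln_exp in *. lra. }
  assert (Hs2 : s < time_of u2).
  { pose proof (time_of_sub_ln_le 1 u2 (conj Rlt_0_1 Hu2)).
    pose proof (ln_le (exp (13 / 3 * s + 1)) u2 (exp_pos _) (Rmax_r _ _)).
    rewrite time_of_1, ln_1, ln_exp in *. lra. }
  assert (Hu12 : u1 < u2).
  { assert (u1 <= 1) by apply Rmin_l.
    destruct (Req_dec u1 u2) as [Heq|]; [rewrite Heq in Hs1; lra| lra]. }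
  destruct (IVT_interv (fun u => time_of u - s) u1 u2) as [u [Hu Hus]]; [| exact Hu12| lra| lra|].
  - intros u Hu. apply continuity_pt_minus; [| apply continuity_pt_const; now intros ? ?].
    apply (continuity_pt_of_is_derive _ _ _ (is_derive_time_of u ltac:(lra))).
  - exists u. split; lra.
Qed.

Definition time_inv (s : R) : R := epsilon (inhabits 1) (fun u => 0 < u /\ time_of u = s).

Lemma time_inv_spec s : 0 < time_inv s /\ time_of (time_inv s) = s.
Proof. unfold time_inv. apply epsilon_spec, time_of_surj. Qed.

Lemma time_of_inj u v : 0 < u -> 0 < v -> time_of u = time_of v -> u = v.
Proof.
  intros Hu Hv Huv_eq. destruct (Rtotal_order u v) as [Huv|[|Huv]]; [| assumption|].
  - pose proof (time_of_lt u v Hu Huv). lra.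
  - pose proof (time_of_lt v u Hv Huv). lra.
Qed.

Lemma time_inv_of u : 0 < u -> time_inv (time_of u) = u.
Proof. intro Hu. destruct (time_inv_spec (time_of u)). now apply time_of_inj. Qed.

Lemma time_inv_le s t : s <= t -> time_inv s <= time_inv t.
Proof.
  intro Hst. destruct (time_inv_spec s) as [_ Hs], (time_inv_spec t) as [Ht Ht'].
  destruct (Rle_or_lt (time_inv s) (time_inv t)) as [|Hlt]; [assumption|].
  pose proof (time_of_lt _ _ Ht Hlt). lra.
Qed.

Lemma time_inv_lt s t : s < t -> time_inv s < time_inv t.
Proof.
  intro Hst. destruct (Req_dec (time_inv s) (time_inv t)) as [Heq|Hne].
  - pose proof (proj2 (time_inv_spec s)). pose proof (proj2 (time_inv_spec t)).
    rewrite Heq in *. lra.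
  - pose proof (time_inv_le s t (Rlt_le _ _ Hst)). lra.
Qed.

Lemma continuity_pt_time_inv s : continuity_pt time_inv s.
Proof.
  destruct (time_inv_spec (s - 1)) as [Hlb Hlb'], (time_inv_spec (s + 1)) as [_ Hub'].
  apply (continuity_pt_recip_interv time_of time_inv (time_inv (s - 1)) (time_inv (s + 1))).
  - apply time_inv_lt. lra.
  - intros x y Hx Hxy _. apply time_of_lt; lra.
  - intros x _ _. apply time_inv_spec.
  - rewrite Hlb', Hub'. intros x Hx Hx'. split; apply time_inv_le; lra.
  - intros u Hu. apply (continuity_pt_of_is_derive _ _ _ (is_derive_time_of u ltac:(lra))).
  - rewrite Hlb', Hub'. lra.
Qed.

Lemma is_derive_time_inv s : is_derive time_inv s (qstar (time_inv s)).
Proof.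
  apply is_derive_Reals. destruct (time_inv_spec s) as [Hs _].
  pose proof (qstar_between _ Hs) as Hq.
  assert (Hpr : forall u, time_inv (s - 1) <= u <= time_inv (s + 1) -> derivable_pt time_of u).
  { intros u Hu. pose proof (proj1 (time_inv_spec (s - 1))).
    exists (/ qstar u). apply is_derive_Reals, is_derive_time_of. lra. }
  assert (Hmid : time_inv (s - 1) <= time_inv s <= time_inv (s + 1)) by (split; apply time_inv_le; lra).
  pose proof (derivable_pt_lim_recip_interv time_of time_inv (s - 1) (s + 1) s Hpr
    (continuity_pt_time_inv s) ltac:(lra) ltac:(lra) Hmid) as Hinv.
  replace (derive_pt time_of (time_inv s) (Hpr (time_inv s) Hmid)) with (/ qstar (time_inv s)) in Hinv
    by (symmetry; apply derive_pt_eq_0, is_derive_Reals, is_derive_time_of, Hs).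
  replace (qstar (time_inv s)) with (1 / / qstar (time_inv s)) by (field; lra).
  apply Hinv; [intros x _; apply time_inv_spec|].
  apply Rinv_neq_0_compat. lra.
Qed.

(** * The solution *)

Definition Vstar (s : R) : R := -1 - time_inv s.

Lemma is_derive_Vstar s : is_derive Vstar s (- qstar (time_inv s)).
Proof.
  replace (- qstar (time_inv s)) with (0 - qstar (time_inv s)) by ring.
  apply (is_derive_minus (fun _ => -1) time_inv);
    [apply (is_derive_const (-1))| apply is_derive_time_inv].
Qed.

Lemma is_derive_Derive_Vstar s :
  is_derive (Derive Vstar) s (- (3 * qstar (time_inv s) + force (time_inv s))).
Proof.
  destruct (time_inv_spec s) as [Hs _]. pose proof (qstar_between _ Hs).
  apply (is_derive_ext (fun t => - qstar (time_inv t))).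
  { intro t. symmetry. apply is_derive_unique, is_derive_Vstar. }
  replace (- (3 * qstar (time_inv s) + force (time_inv s)))
    with (- (qstar (time_inv s) * (3 + force (time_inv s) / qstar (time_inv s)))) by (field; lra).
  apply (is_derive_opp (fun t => qstar (time_inv t))).
  apply (is_derive_comp qstar time_inv); [apply is_derive_qstar, Hs| apply is_derive_time_inv].
Qed.

Lemma Vstar_solution : is_bvp_solution Vstar.
Proof.
  split; [|split].
  - intro s. split; [|split].
    + eexists. apply is_derive_Vstar.
    + eexists. apply is_derive_Derive_Vstar.
    + change (Derive (Derive Vstar) s - 3 * Derive Vstar s = Rfun (Vstar s)).
      rewrite (is_derive_unique _ _ _ (is_derive_Derive_Vstar s)),
        (is_derive_unique _ _ _ (is_derive_Vstar s)).
      unfold Vstar, force. replace (-1 - (-1 - time_inv s)) with (time_inv s) by ring. ring.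
  - apply is_lim_spec. intro eps. exists (time_of eps). intros s Hs. simpl.
    pose proof (time_inv_lt _ _ Hs) as Hlt. rewrite time_inv_of in Hlt by apply cond_pos.
    pose proof (proj1 (time_inv_spec s)). unfold Vstar. rewrite Rabs_left1; lra.
  - apply is_lim_spec. intro M. exists (time_of (Rmax 1 (- M))). intros s Hs. simpl.
    pose proof (time_inv_lt _ _ Hs) as Hlt. pose proof (Rmax_l 1 (- M)). pose proof (Rmax_r 1 (- M)).
    rewrite time_inv_of in Hlt by lra. unfold Vstar. lra.
Qed.

(** * Uniqueness *)

Lemma Rfun_eq v : Rfun v = - force (-1 - v).
Proof. unfold force. replace (-1 - (-1 - v)) with v by ring. ring. Qed.

Lemma Rfun_ge_m1 v : -1 <= v -> Rfun v = 4 * (v + 1).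
Proof. intro Hv. rewrite Rfun_eq, force_nonpos by lra. ring. Qed.

Lemma force_between u : 0 <= u -> 0 <= force u <= 4 * u.
Proof.
  intros [Hu| <-]; [split; [left; apply force_pos, Hu| apply force_le; lra]|].
  rewrite force_nonpos; lra.
Qed.

Section Solution.

Variable V : R -> R.
Hypothesis HV : is_bvp_solution V.

Lemma sol_ex_derive t : ex_derive V t.
Proof. exact (proj1 (proj1 HV t)). Qed.

Lemma sol_is_derive t : is_derive V t (Derive V t).
Proof. apply Derive_correct, sol_ex_derive. Qed.

Lemma sol_is_derive2 t : is_derive (Derive V) t (3 * Derive V t + Rfun (V t)).
Proof.
  destruct (proj1 HV t) as [_ [Hd2 Heq]].
  change (Derive (Derive V) t - 3 * Derive V t = Rfun (V t)) in Heq.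
  replace (3 * Derive V t + Rfun (V t)) with (Derive (Derive V) t) by lra.
  apply Derive_correct, Hd2.
Qed.

Lemma sol_continuity t : continuity_pt V t.
Proof. exact (continuity_pt_of_is_derive _ _ _ (sol_is_derive t)). Qed.

Lemma sol_near_minus_infty eps : 0 < eps -> exists M, forall t, t < M -> Rabs (V t + 1) < eps.
Proof.
  intro Heps. destruct (proj2 (is_lim_spec _ _ _) (proj1 (proj2 HV)) (mkposreal eps Heps)) as [M HM].
  exists M. intros t Ht. replace (V t + 1) with (V t - -1) by ring. exact (HM t Ht).
Qed.

Lemma sol_near_plus_infty A : exists M, forall t, M < t -> V t < A.
Proof. exact (proj2 (is_lim_spec _ _ _) (proj2 (proj2 HV)) A). Qed.

Lemma sol_le_m1 t : V t <= -1.
Proof.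
  destruct (Rle_or_lt (V t) (-1)) as [|Ht]; [assumption| exfalso].
  destruct (sol_near_minus_infty (V t + 1) ltac:(lra)) as [a Ha].
  destruct (sol_near_plus_infty (V t)) as [b Hb].
  pose proof (Rmin_l a t). pose proof (Rmin_r a t). pose proof (Rmax_l b t). pose proof (Rmax_r b t).
  destruct (exists_global_max V t (Rmin a t - 1) (Rmax b t + 1) ltac:(lra) sol_continuity)
    as [c Hc].
  { intros x [Hx|Hx]; [|apply Hb; lra].
    pose proof (Rabs_def2 _ _ (Ha x ltac:(lra))). lra. }
  pose proof (Derive_eq_0_at_max V c (sol_ex_derive c) Hc) as Hc'.
  pose proof (second_derive_nonpos_at_max V c _ sol_ex_derive (sol_is_derive2 c) Hc) as Hconvex.
  pose proof (Hc t). rewrite Hc', Rfun_ge_m1 in Hconvex by lra. lra.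
Qed.

Lemma sol_Derive_eq_0_of_m1 z : V z = -1 -> Derive V z = 0.
Proof.
  intro Hz. apply (Derive_eq_0_at_max V z (sol_ex_derive z)). intro x. rewrite Hz. apply sol_le_m1.
Qed.

Lemma is_derive_sol_depth t : is_derive (fun s => -1 - V s) t (- Derive V t).
Proof.
  replace (- Derive V t) with (0 - Derive V t) by ring.
  apply (is_derive_minus (fun _ => -1) V); [apply (is_derive_const (-1))| apply sol_is_derive].
Qed.

(* [e^(-3t)] is an integrating factor for [V'' - 3 V']. *)
Definition damped (t : R) : R := Derive V t * exp (- (3 * t)).

Lemma is_derive_damped t : is_derive damped t (Rfun (V t) * exp (- (3 * t))).
Proof.
  unfold damped.
  replace (Rfun (V t) * exp (- (3 * t)))
    with ((3 * Derive V t + Rfun (V t)) * exp (- (3 * t)) + Derive V t * (- 3 * exp (- (3 * t))))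
    by ring.
  apply (is_derive_mult (Derive V) (fun t => exp (- (3 * t)))); [apply sol_is_derive2| |].
  - auto_derive; [exact I| ring].
  - exact Rmult_comm.
Qed.

Lemma Derive_damped t : Derive V t = damped t * exp (3 * t).
Proof.
  unfold damped. rewrite Rmult_assoc, <- exp_plus.
  replace (- (3 * t) + 3 * t) with 0 by ring. rewrite exp_0. ring.
Qed.

Lemma damped_variation delta t T : t <= T -> (forall s, t <= s <= T -> -1 - V s <= delta) ->
  Rabs (damped T - damped t) <= 4 / 3 * delta * (exp (- (3 * t)) - exp (- (3 * T))).
Proof.
  intros HtT Hdelta.
  replace (4 / 3 * delta * (exp (- (3 * t)) - exp (- (3 * T))))
    with ((fun s => - (4 / 3 * delta) * exp (- (3 * s))) T
          - (fun s => - (4 / 3 * delta) * exp (- (3 * s))) t)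
    by (simpl; ring).
  apply (Rabs_sub_le_of_is_derive damped (fun s => Rfun (V s) * exp (- (3 * s)))
    (fun s => - (4 / 3 * delta) * exp (- (3 * s))) (fun s => 4 * delta * exp (- (3 * s))));
    [exact HtT| intros; apply is_derive_damped| |].
  - intros s _. auto_derive; [exact I| field].
  - intros s Hs. pose proof (sol_le_m1 s). pose proof (Hdelta s Hs).
    pose proof (force_between (-1 - V s) ltac:(lra)). pose proof (exp_pos (- (3 * s))).
    rewrite Rfun_eq, Rabs_mult, Rabs_Ropp, (Rabs_right (exp _)), Rabs_right by lra.
    apply Rmult_le_compat_r; lra.
Qed.

Lemma sol_m1_Derive_bound z M : V z = -1 -> (forall x, z <= x <= z + 1 / 4 -> -1 - V x <= M) ->
  forall x, z <= x <= z + 1 / 4 -> - Derive V x <= 8 / 3 * M.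
Proof.
  intros Hz HM x Hx. pose proof (HM z ltac:(lra)) as HM0. rewrite Hz in HM0.
  assert (Hdz : damped z = 0) by (unfold damped; rewrite sol_Derive_eq_0_of_m1 by exact Hz; ring).
  pose proof (damped_variation M z x (proj1 Hx) (fun s Hs => HM s ltac:(lra))) as Hvar.
  rewrite Hdz, Rminus_0_r in Hvar.
  assert (He1 : exp (- (3 * z)) * exp (3 * x) = exp (3 * (x - z)))
    by (rewrite <- exp_plus; f_equal; ring).
  assert (He2 : exp (- (3 * x)) * exp (3 * x) = 1) by (rewrite <- exp_plus, <- exp_0; f_equal; ring).
  assert (He3 : exp (3 * (x - z)) <= 3)
    by (apply (Rle_trans _ (exp 1)); [apply exp_le_compat; lra| apply exp_le_3]).
  pose proof (exp_pos (3 * x)). pose proof (Rle_abs (- damped x)) as Habs. rewrite Rabs_Ropp in Habs.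
  pose proof (Rmult_le_compat_r (exp (3 * x)) _ _ ltac:(lra) (Rle_trans _ _ _ Habs Hvar)) as Hd.
  replace (4 / 3 * M * (exp (- (3 * z)) - exp (- (3 * x))) * exp (3 * x))
    with (4 / 3 * M * (exp (- (3 * z)) * exp (3 * x) - exp (- (3 * x)) * exp (3 * x))) in Hd by ring.
  rewrite He1, He2 in Hd. rewrite Derive_damped. nra.
Qed.

(* Local uniqueness at the equilibrium: [W = -1 - V] starts with [W = W' = 0], so on a quarter
   interval [W <= 8/3 * max W * 1/4], which forces [max W = 0]. *)
Lemma sol_m1_stays z : V z = -1 -> V (z + 1 / 4) = -1.
Proof.
  intro Hz.
  assert (Hcont : forall x, continuity_pt (fun x => -1 - V x) x)
    by (intro x; apply (continuity_pt_of_is_derive _ _ _ (is_derive_sol_depth x))).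
  destruct (continuity_ab_maj (fun x => -1 - V x) z (z + 1 / 4) ltac:(lra) (fun x _ => Hcont x))
    as [c [Hmax Hc]].
  set (M := -1 - V c) in Hmax.
  assert (Hgrowth : 8 / 3 * M * z - (-1 - V z) <= 8 / 3 * M * c - (-1 - V c)).
  { apply (is_derive_nonneg_le (fun s => 8 / 3 * M * s - (-1 - V s))
      (fun s => 8 / 3 * M - - Derive V s)); [lra| |].
    - intros y _. apply (is_derive_minus (fun s => 8 / 3 * M * s) (fun s => -1 - V s)).
      + apply is_derive_mult_const.
      + apply is_derive_sol_depth.
    - intros y Hy. pose proof (sol_m1_Derive_bound z M Hz Hmax y ltac:(lra)). lra. }
  pose proof (Hmax (z + 1 / 4) ltac:(lra)). pose proof (sol_le_m1 c). pose proof (sol_le_m1 (z + 1 / 4)).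
  rewrite Hz in Hgrowth. unfold M in *. nra.
Qed.

Lemma sol_lt_m1 t : V t < -1.
Proof.
  destruct (Req_dec (V t) (-1)) as [Ht|]; [exfalso| pose proof (sol_le_m1 t); lra].
  assert (Hn : forall n, V (t + INR n / 4) = -1).
  { induction n as [|n IH]; [rewrite Rdiv_0_l, Rplus_0_r; exact Ht|].
    rewrite S_INR. replace (t + (INR n + 1) / 4) with (t + INR n / 4 + 1 / 4) by field.
    now apply sol_m1_stays. }
  destruct (sol_near_plus_infty (-2)) as [b Hb].
  destruct (INR_unbounded (4 * (b - t))) as [n Hnb].
  pose proof (Hb (t + INR n / 4) ltac:(lra)) as Hbn. rewrite Hn in Hbn. lra.
Qed.

(* With [|V + 1| <= eps/8] on [(-oo, T0]], [damped_variation] gives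
   [|V'(t)| <= |damped T0| e^(3t) + eps/6] there. *)
Lemma sol_Derive_near_minus_infty eps : 0 < eps ->
  exists T, forall t, t < T -> Rabs (Derive V t) < eps.
Proof.
  intro Heps. destruct (sol_near_minus_infty (eps / 8) ltac:(lra)) as [M HM].
  set (T0 := M - 1). set (c := Rabs (damped T0)). assert (Hc : 0 <= c) by apply Rabs_pos.
  exists (Rmin T0 (/ 3 * ln (eps / (2 * (c + 1))))). intros t Ht.
  pose proof (Rmin_l T0 (/ 3 * ln (eps / (2 * (c + 1))))) as Ht0.
  pose proof (Rmin_r T0 (/ 3 * ln (eps / (2 * (c + 1))))) as Htln.
  pose proof (exp_pos (3 * t)). pose proof (exp_pos (- (3 * T0))). pose proof (exp_pos (- (3 * t))).
  assert (Hdt : Rabs (damped t) <= c + eps / 6 * exp (- (3 * t))).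
  { assert (Hvar : Rabs (damped T0 - damped t)
                    <= 4 / 3 * (eps / 8) * (exp (- (3 * t)) - exp (- (3 * T0)))).
    { apply damped_variation; [lra|]. intros s Hs.
      pose proof (Rabs_def2 _ _ (HM s ltac:(unfold T0 in *; lra))). lra. }
    replace (damped t) with (damped T0 - (damped T0 - damped t)) by ring.
    eapply Rle_trans; [apply Rabs_triang|]. rewrite Rabs_Ropp. fold c. nra. }
  assert (Hexp : exp (3 * t) < eps / (2 * (c + 1))).
  { rewrite <- (exp_ln (eps / (2 * (c + 1)))) by (apply Rdiv_lt_0_compat; lra).
    apply exp_increasing. lra. }
  assert (Hinv : exp (- (3 * t)) * exp (3 * t) = 1)
    by (rewrite <- exp_plus, <- exp_0; f_equal; ring).
  assert (c * exp (3 * t) <= eps / 2).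
  { apply (Rle_trans _ ((c + 1) * exp (3 * t))); [nra|].
    apply (Rle_trans _ ((c + 1) * (eps / (2 * (c + 1))))); [apply Rmult_le_compat_l; lra|].
    right. field. lra. }
  rewrite Derive_damped, Rabs_mult, (Rabs_right (exp _)) by lra.
  apply (Rle_lt_trans _ ((c + eps / 6 * exp (- (3 * t))) * exp (3 * t)));
    [apply Rmult_le_compat_r; lra|].
  replace ((c + eps / 6 * exp (- (3 * t))) * exp (3 * t))
    with (c * exp (3 * t) + eps / 6 * (exp (- (3 * t)) * exp (3 * t))) by ring.
  rewrite Hinv. lra.
Qed.

Definition phase_defect (t : R) : R := - Derive V t - qstar (-1 - V t).

Lemma is_derive_phase_defect t :
  is_derive phase_defect t (- (force (-1 - V t) / qstar (-1 - V t)) * phase_defect t).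
Proof.
  pose proof (sol_lt_m1 t). pose proof (qstar_between (-1 - V t) ltac:(lra)).
  unfold phase_defect.
  replace (- (force (-1 - V t) / qstar (-1 - V t)) * (- Derive V t - qstar (-1 - V t)))
    with (- (3 * Derive V t + Rfun (V t))
          - - Derive V t * (3 + force (-1 - V t) / qstar (-1 - V t)))
    by (rewrite Rfun_eq; field; lra).
  apply (is_derive_minus (fun t => - Derive V t) (fun t => qstar (-1 - V t))).
  - apply (is_derive_opp (Derive V)), sol_is_derive2.
  - apply (is_derive_comp qstar (fun t => -1 - V t)); [apply is_derive_qstar; lra|].
    apply is_derive_sol_depth.
Qed.

Lemma phase_defect_near_minus_infty eps : 0 < eps ->
  exists T, forall t, t < T -> Rabs (phase_defect t) < eps.
Proof.
  intro Heps. destruct (sol_Derive_near_minus_infty (eps / 2) ltac:(lra)) as [T1 HT1].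
  destruct (sol_near_minus_infty (eps / 10) ltac:(lra)) as [T2 HT2].
  exists (Rmin T1 T2). intros t Ht. pose proof (Rmin_l T1 T2). pose proof (Rmin_r T1 T2).
  pose proof (HT1 t ltac:(lra)). pose proof (Rabs_def2 _ _ (HT2 t ltac:(lra))).
  pose proof (sol_lt_m1 t). pose proof (qstar_between (-1 - V t) ltac:(lra)).
  unfold phase_defect. eapply Rle_lt_trans; [apply Rabs_triang|].
  rewrite !Rabs_Ropp, (Rabs_right (qstar _)) by lra. lra.
Qed.

(* [phase_defect] decays along the flow, so it can only be small at [-oo] if it vanishes. *)
Lemma phase_defect_eq_0 t : phase_defect t = 0.
Proof.
  destruct (Req_dec (phase_defect t) 0) as [|Hne]; [assumption| exfalso].
  pose proof (Rabs_pos_lt _ Hne) as Hpos.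
  destruct (phase_defect_near_minus_infty _ Hpos) as [T HT].
  pose proof (HT (Rmin T t - 1) ltac:(pose proof (Rmin_l T t); lra)) as Hsmall.
  pose proof (sq_nonincreasing_of_is_derive phase_defect (fun s => force (-1 - V s) / qstar (-1 - V s))
    is_derive_phase_defect) as Hmono.
  assert (Hsq : phase_defect t ^ 2 <= phase_defect (Rmin T t - 1) ^ 2).
  { apply Hmono; [|pose proof (Rmin_r T t); lra].
    intro s. pose proof (sol_lt_m1 s). pose proof (qstar_between (-1 - V s) ltac:(lra)).
    left. apply Rdiv_lt_0_compat; [apply force_pos|]; lra. }
  rewrite <- (pow2_abs (phase_defect t)), <- (pow2_abs (phase_defect (Rmin T t - 1))) in Hsq.
  pose proof (Rabs_pos (phase_defect (Rmin T t - 1))). nra.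
Qed.

Lemma sol_eq_Vstar_shift : exists c, forall t, V t = Vstar (t + c).
Proof.
  set (shift := fun t => time_of (-1 - V t) - t).
  assert (Hshift : forall t, shift t = shift 0).
  { intro t0. apply is_derive_0_eq. intro t. pose proof (sol_lt_m1 t).
    pose proof (qstar_between (-1 - V t) ltac:(lra)).
    pose proof (phase_defect_eq_0 t) as Hdefect. unfold phase_defect in Hdefect.
    replace 0 with (- Derive V t * / qstar (-1 - V t) - 1)
      by (replace (- Derive V t) with (qstar (-1 - V t)) by lra; field; lra).
    apply (is_derive_minus (fun s => time_of (-1 - V s)) (fun s => s)).
    - apply (is_derive_comp time_of (fun s => -1 - V s)); [apply is_derive_time_of; lra|].
      apply is_derive_sol_depth.
    - exact (is_derive_id t). }
  exists (shift 0). intro t. unfold Vstar. rewrite <- (Hshift t). unfold shift.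
  replace (t + (time_of (-1 - V t) - t)) with (time_of (-1 - V t)) by ring.
  rewrite time_inv_of by (pose proof (sol_lt_m1 t); lra). ring.
Qed.

End Solution.

Theorem lemma4p6 :
  (exists V : R -> R, is_bvp_solution V) /\
  (forall V1 V2 : R -> R, is_bvp_solution V1 -> is_bvp_solution V2 ->
     exists s0 : R, forall s : R, V1 s = V2 (s + s0)).
Proof.
  split; [exists Vstar; exact Vstar_solution|].
  intros V1 V2 H1 H2.
  destruct (sol_eq_Vstar_shift V1 H1) as [c1 E1], (sol_eq_Vstar_shift V2 H2) as [c2 E2].
  exists (c1 - c2). intro s. rewrite E1, E2. f_equal. ring.
Qed.
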